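(* Let $V_1, V_2$ be jointly distributed binary random variables (values in $\{0,1\}$), and let $K = V_1 \oplus V_2$ (addition modulo $2$). Then the common-compression Slepian–Wolf rate for the pair $(V_1,V_2)$ satisfies $$R^{s.c.}_{SW} \le \max\big(H(K),\, H(V_1\mid K)\big).$$
   Context: Let $V_1,\dots,V_r$ be jointly distributed binary random variables with joint law $p(v_1,\dots,v_r)$, and for each $n$ let $(V_1[t],\dots,V_r[t])$, $t=1,\dots,n$, be i.i.d. copies; write $V_i^n$ for the column vector $(V_i[1],\dots,V_i[n])^t\in\mathbb{F}_2^n$. A rate $R\ge 0$ is achievable with a common compression matrix if for every $\epsilon>0$ and all sufficiently large $n$ there exist a single binary matrix $B$ of size $\lceil nR\rceil\times n$ and a decoding map $g$ such that $\Pr\big[g(BV_1^n,\dots,BV_r^n)\neq (V_1^n,\dots,V_r^n)\big]\le\epsilon$, where the products $BV_i^n$ are computed over $\mathbb{F}_2$. $R^{s.c.}_{SW}$ (Slepian–Wolf with the same compression matrices) denotes the infimum of all rates achievable with a common compression matrix. $H(\cdot)$ denotes Shannon entropy in bits. *)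

From Stdlib Require Import Reals List ZArith Bool.
Import ListNotations.
Open Scope R_scope.

Fixpoint all_seqs (n : nat) : list (list bool) :=
  match n with
  | O => [nil]
  | S k => flat_map (fun s => [false :: s; true :: s]) (all_seqs k)
  end.

(* Product over F_2 of an m x n binary matrix B (entry B i t in row i,
   column t) with the column vector x in F_2^n; result in F_2^m. *)
Definition compress (m n : nat) (B : nat -> nat -> bool) (x : list bool)
  : list bool :=
  map (fun i => fold_right xorb false
                  (map (fun t => andb (B i t) (nth t x false)) (seq 0 n)))
      (seq 0 m).

Definition Rsum (l : list R) : R := fold_right Rplus 0 l.

(* Probability of the pair of sequences (x, y) under n i.i.d. copies of
   (V1, V2) with joint law p. *)
Definition seq_prob (p : bool -> bool -> R) (x y : list bool) : R :=
  fold_right Rmult 1 (map (fun ab => p (fst ab) (snd ab)) (combine x y)).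

Definition pair_eqb (u v : list bool * list bool) : bool :=
  if list_eq_dec bool_dec (fst u) (fst v) then
    if list_eq_dec bool_dec (snd u) (snd v) then true else false
  else false.

(* Pr[ g(B V1^n, B V2^n) <> (V1^n, V2^n) ] for an m x n matrix B. *)
Definition err_prob (p : bool -> bool -> R) (n m : nat)
  (B : nat -> nat -> bool)
  (g : list bool -> list bool -> list bool * list bool) : R :=
  Rsum (flat_map (fun x =>
          map (fun y => seq_prob p x y *
                 (if pair_eqb (g (compress m n B x) (compress m n B y)) (x, y)
                  then 0 else 1))
              (all_seqs n))
        (all_seqs n)).

(* ceiling of a nonnegative real, as a nat:  ceil x = 1 - up(-x). *)
Definition ceil_nat (x : R) : nat := Z.to_nat (1 - up (- x))%Z.

Definition achievable_sc (p : bool -> bool -> R) (Rt : R) : Prop :=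
  0 <= Rt /\
  forall eps, eps > 0 ->
    exists N : nat, forall n : nat, (N <= n)%nat ->
      exists (B : nat -> nat -> bool)
             (g : list bool -> list bool -> list bool * list bool),
        err_prob p n (ceil_nat (INR n * Rt)) B g <= eps.

(* x log2 x with the convention 0 log 0 = 0. *)
Definition plog2 (x : R) : R := if Rle_dec x 0 then 0 else x * (ln x / ln 2).

Definition pK (p : bool -> bool -> R) (k : bool) : R :=
  p false (xorb false k) + p true (xorb true k).

Definition pV1K (p : bool -> bool -> R) (v k : bool) : R := p v (xorb v k).

Definition H_K (p : bool -> bool -> R) : R :=
  - (plog2 (pK p false) + plog2 (pK p true)).

Definition H_V1K (p : bool -> bool -> R) : R :=
  - (plog2 (pV1K p false false) + plog2 (pV1K p false true)
     + plog2 (pV1K p true false) + plog2 (pV1K p true true)).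

Definition H_V1_given_K (p : bool -> bool -> R) : R := H_V1K p - H_K p.

(* The proof is a random linear binning argument with a two-stage decoder.
   Compression is F_2-linear, so from B v1 and B v2 the decoder knows B k for
   k = v1 xor v2.  It first picks the most likely k' (under the law of K^n) in
   the bin of B k, then the most likely v' in the bin of B v1 jointly with that
   k'.  Decoding fails only if a "rival" shares a bin and is at least as
   likely.  Two distinct sequences share a bin for exactly a 2^-m fraction of
   all m x n matrices, so Gallager's bound min(1, N) <= N^s bounds the average
   error probability by 2^(-m s) (A_K(s)^n + A_V(s)^n), where A_K and A_V are
   tilted sums over the alphabet.  Second-order bounds give
   A_K(s) <= 1 + s ln 2 H(K) + O(s^2) and A_V(s) <= 1 + s ln 2 H(V1|K) + O(s^2),
   so for m >= n (c + delta/2) and a small fixed s the error decays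
   exponentially in n, which yields achievability. *)

From Stdlib Require Import Reals List ZArith Bool Lra Lia.
Import ListNotations.
Open Scope R_scope.

Definition lsum {T} (l : list T) (f : T -> R) : R := Rsum (map f l).

Lemma lsum_cons {T} (a : T) l f : lsum (a :: l) f = f a + lsum l f.
Proof. reflexivity. Qed.

Lemma lsum_app {T} (l1 l2 : list T) f : lsum (l1 ++ l2) f = lsum l1 f + lsum l2 f.
Proof. induction l1 as [|a l1 IH]; unfold lsum, Rsum in *; simpl; [lra|]. rewrite IH; lra. Qed.

Lemma lsum_add {T} (l : list T) f g : lsum l (fun x => f x + g x) = lsum l f + lsum l g.
Proof. induction l as [|a l IH]; unfold lsum, Rsum in *; simpl; [lra|]. rewrite IH; lra. Qed.

Lemma lsum_scal_l {T} (l : list T) c f : lsum l (fun x => c * f x) = c * lsum l f.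
Proof. induction l as [|a l IH]; unfold lsum, Rsum in *; simpl; [lra|]. rewrite IH; lra. Qed.

Lemma lsum_scal_r {T} (l : list T) c f : lsum l (fun x => f x * c) = lsum l f * c.
Proof. induction l as [|a l IH]; unfold lsum, Rsum in *; simpl; [lra|]. rewrite IH; lra. Qed.

Lemma lsum_ext {T} (l : list T) f g :
  (forall x, In x l -> f x = g x) -> lsum l f = lsum l g.
Proof.
  intros Hfg. unfold lsum. f_equal. apply map_ext_in. exact Hfg.
Qed.

Lemma lsum_le {T} (l : list T) f g :
  (forall x, In x l -> f x <= g x) -> lsum l f <= lsum l g.
Proof.
  induction l as [|a l IH]; intros Hfg; cbn; [lra|].
  apply Rplus_le_compat; [apply Hfg; left; auto|].
  apply IH; intros x Hx; apply Hfg; right; auto.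
Qed.

Lemma lsum_const {T} (l : list T) c : lsum l (fun _ => c) = INR (length l) * c.
Proof.
  induction l as [|a l IH]; [cbn; lra|].
  rewrite lsum_cons, IH; cbn [length]; rewrite S_INR; lra.
Qed.

Lemma lsum_nonneg {T} (l : list T) f : (forall x, In x l -> 0 <= f x) -> 0 <= lsum l f.
Proof.
  intros Hf. replace 0 with (lsum l (fun _ => 0)) by (rewrite lsum_const; lra).
  apply lsum_le; exact Hf.
Qed.

Lemma lsum_swap {T U} (l1 : list T) (l2 : list U) f :
  lsum l1 (fun x => lsum l2 (fun y => f x y)) = lsum l2 (fun y => lsum l1 (fun x => f x y)).
Proof.
  induction l1 as [|a l1 IH].
  - cbn. rewrite lsum_const. lra.
  - rewrite lsum_cons, IH, <- lsum_add. reflexivity.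
Qed.

Lemma lsum_term_le {T} (l : list T) f a :
  In a l -> (forall x, In x l -> 0 <= f x) -> f a <= lsum l f.
Proof.
  induction l as [|b l IH]; [intros []|]. intros Ha Hf. rewrite lsum_cons.
  assert (0 <= f b) by (apply Hf; left; auto).
  assert (0 <= lsum l f) by (apply lsum_nonneg; intros; apply Hf; right; auto).
  destruct Ha as [<-|Ha]; [lra|].
  assert (f a <= lsum l f) by (apply IH; auto; intros; apply Hf; right; auto). lra.
Qed.

Lemma lsum_map {T U} (h : T -> U) l F : lsum (map h l) F = lsum l (fun x => F (h x)).
Proof. unfold lsum. rewrite map_map. reflexivity. Qed.

Lemma lsum_flat_map {T U} (h : T -> list U) l F :
  lsum (flat_map h l) F = lsum l (fun x => lsum (h x) F).
Proof.
  induction l as [|a l IH]; [reflexivity|].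
  cbn [flat_map]. rewrite lsum_app, lsum_cons, IH. reflexivity.
Qed.

Lemma Rsum_flat_map_map {T U} (l1 : list T) (l2 : list U) h :
  Rsum (flat_map (fun x => map (h x) l2) l1) = lsum l1 (fun x => lsum l2 (h x)).
Proof.
  transitivity (lsum (flat_map (fun x => map (h x) l2) l1) (fun r => r)).
  { unfold lsum. rewrite map_id. reflexivity. }
  rewrite lsum_flat_map. apply lsum_ext; intros x _. rewrite lsum_map. reflexivity.
Qed.

Lemma exists_le_average {T} (l : list T) f c :
  l <> [] -> lsum l f <= lsum l (fun _ => c) -> exists z, In z l /\ f z <= c.
Proof.
  induction l as [|a l IH]; intros Hne H; [congruence|].
  destruct (Rle_dec (f a) c) as [Ha|Ha]; [exists a; split; [left|]; auto|].
  rewrite !lsum_cons in H. destruct l as [|b l'].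
  - cbn in H. lra.
  - destruct (IH ltac:(discriminate)) as [z [Hz Hfz]]; [lra|].
    exists z; split; [right|]; auto.
Qed.

Lemma count_le_sum {T} (l : list T) f a :
  0 <= a -> (forall z, 0 <= f z) ->
  lsum l (fun z => if Rle_dec a (f z) then 1 else 0) * a <= lsum l f.
Proof.
  intros Ha Hf. rewrite <- lsum_scal_r. apply lsum_le; intros z _.
  destruct Rle_dec; [lra|]. rewrite Rmult_0_l; apply Hf.
Qed.

Lemma lsum_min1 {T} (l : list T) f :
  lsum l (fun z => Rmin 1 (f z)) <= Rmin (lsum l (fun _ => 1)) (lsum l f).
Proof. apply Rmin_glb; apply lsum_le; intros; [apply Rmin_l | apply Rmin_r]. Qed.

Definition sum4 (f : bool -> bool -> R) : R :=
  f false false + f false true + f true false + f true true.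

Lemma sum4_le f g : (forall a b, f a b <= g a b) -> sum4 f <= sum4 g.
Proof. intros Hfg. unfold sum4. pose proof (Hfg false false); pose proof (Hfg false true);
  pose proof (Hfg true false); pose proof (Hfg true true). lra. Qed.

Definition lprod {T} (g : T -> R) (k : list T) : R := fold_right Rmult 1 (map g k).

Lemma in_all_seqs n l : In l (all_seqs n) <-> length l = n.
Proof.
  revert l; induction n as [|n IH]; intros l; cbn.
  - split; [intros [<-|[]]; auto|]. destruct l; [auto|discriminate].
  - rewrite in_flat_map. split.
    + intros [s [Hs Hl]]. apply IH in Hs. destruct Hl as [<-|[<-|[]]]; cbn; auto.
    + destruct l as [|b s]; cbn; intros H; [discriminate|]. exists s; split.
      * apply IH; lia.
      * destruct b; cbn; auto.
Qed.

Lemma lsum_all_seqs_S n g :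
  lsum (all_seqs (S n)) g = lsum (all_seqs n) (fun s => g (false :: s) + g (true :: s)).
Proof.
  cbn [all_seqs]. rewrite lsum_flat_map. apply lsum_ext; intros s _. cbn. lra.
Qed.

Lemma lsum_all_seqs_one n : lsum (all_seqs n) (fun _ => 1) = 2 ^ n.
Proof.
  induction n as [|n IH]; [cbn; lra|].
  rewrite lsum_all_seqs_S, (lsum_ext _ _ (fun _ => 2 * 1)) by (intros; lra).
  rewrite lsum_scal_l, IH. reflexivity.
Qed.

Lemma lsum_lprod n g : lsum (all_seqs n) (lprod g) = (g false + g true) ^ n.
Proof.
  induction n as [|n IH]; [cbn; lra|].
  rewrite lsum_all_seqs_S. cbn [pow]. rewrite <- IH, <- lsum_scal_l.
  apply lsum_ext; intros s _. unfold lprod; cbn. lra.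
Qed.

Lemma seq_prob_cons f a x b y : seq_prob f (a :: x) (b :: y) = f a b * seq_prob f x y.
Proof. reflexivity. Qed.

Lemma seq_prob_total f n :
  lsum (all_seqs n) (fun x => lsum (all_seqs n) (fun y => seq_prob f x y)) = sum4 f ^ n.
Proof.
  induction n as [|n IH]; [cbn; unfold sum4; lra|].
  rewrite lsum_all_seqs_S. cbn [pow]. rewrite <- IH, <- lsum_scal_l.
  apply lsum_ext; intros s _. rewrite !lsum_all_seqs_S, <- lsum_scal_l, <- lsum_add.
  apply lsum_ext; intros t _. rewrite !seq_prob_cons. unfold sum4. lra.
Qed.

Lemma seq_prob_marginal f k :
  lsum (all_seqs (length k)) (fun v => seq_prob f v k)
  = lprod (fun b => f false b + f true b) k.
Proof.
  induction k as [|b k IH]; [cbn; lra|].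
  cbn [length]. rewrite lsum_all_seqs_S. unfold lprod; cbn [map fold_right].
  fold (lprod (fun b => f false b + f true b) k). rewrite <- IH, <- lsum_scal_l.
  apply lsum_ext; intros s _. rewrite !seq_prob_cons. lra.
Qed.

Lemma seq_prob_nonneg f x y : (forall a b, 0 <= f a b) -> 0 <= seq_prob f x y.
Proof.
  intros Hf. unfold seq_prob. induction (combine x y); cbn; [lra|].
  apply Rmult_le_pos; auto.
Qed.

Lemma seq_prob_mult f g x y :
  seq_prob (fun a b => f a b * g a b) x y = seq_prob f x y * seq_prob g x y.
Proof. unfold seq_prob. induction (combine x y) as [|ab l IH]; cbn; [lra|]. rewrite IH; lra. Qed.

Lemma seq_prob_le f g x y :
  (forall a b, 0 <= f a b <= g a b) -> seq_prob f x y <= seq_prob g x y.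
Proof.
  intros Hfg. revert y; induction x as [|a x IH]; intros [|b y]; try (cbn; lra).
  rewrite !seq_prob_cons.
  assert (0 <= seq_prob f x y) by (apply seq_prob_nonneg; apply Hfg).
  apply Rmult_le_compat; auto; apply Hfg.
Qed.

(** * Linear algebra over F_2 *)

Definition xorl (u w : list bool) : list bool :=
  map (fun ab => xorb (fst ab) (snd ab)) (combine u w).

Lemma xorl_cons a u b w : xorl (a :: u) (b :: w) = xorb a b :: xorl u w.
Proof. reflexivity. Qed.

Lemma length_xorl u w : length u = length w -> length (xorl u w) = length u.
Proof. unfold xorl. rewrite length_map, length_combine. lia. Qed.

Lemma xorl_inv x y : length x = length y -> xorl x (xorl x y) = y.
Proof.
  revert y; induction x as [|a x IH]; intros [|b y] H; try discriminate; [reflexivity|].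
  rewrite !xorl_cons, IH by (cbn in H; lia). destruct a, b; reflexivity.
Qed.

Lemma nth_xorl u w t :
  length u = length w -> nth t (xorl u w) false = xorb (nth t u false) (nth t w false).
Proof.
  revert w t; induction u as [|a u IH]; intros [|b w] t H; try discriminate.
  - destruct t; reflexivity.
  - rewrite xorl_cons. destruct t; [reflexivity|]. cbn [nth]. apply IH. cbn in H; lia.
Qed.

Lemma xorl_map {T} (f g : T -> bool) l :
  xorl (map f l) (map g l) = map (fun i => xorb (f i) (g i)) l.
Proof. induction l as [|a l IH]; [reflexivity|]. cbn [map]. rewrite xorl_cons, IH. reflexivity. Qed.

Lemma fold_xorb_map {T} (f g : T -> bool) l :
  fold_right xorb false (map (fun i => xorb (f i) (g i)) l) =
  xorb (fold_right xorb false (map f l)) (fold_right xorb false (map g l)).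
Proof.
  induction l as [|a l IH]; cbn; [reflexivity|]. rewrite IH.
  destruct (f a), (g a), (fold_right xorb false (map f l)), (fold_right xorb false (map g l));
    reflexivity.
Qed.

(* Compression by a binary matrix is F_2-linear; this lets the decoder compute
   [B (V1 xor V2)] from the two compressed sequences. *)
Lemma compress_xorl m n B x y : length x = length y ->
  compress m n B (xorl x y) = xorl (compress m n B x) (compress m n B y).
Proof.
  intros Hxy. unfold compress. rewrite xorl_map. apply map_ext; intros i.
  rewrite <- fold_xorb_map. f_equal. apply map_ext; intros t.
  rewrite nth_xorl by exact Hxy.
  destruct (B i t), (nth t x false), (nth t y false); reflexivity.
Qed.

Definition dotl (r k : list bool) : bool :=
  fold_right xorb false (map (fun ab => andb (fst ab) (snd ab)) (combine r k)).

Lemma dotl_cons b r a k : dotl (b :: r) (a :: k) = xorb (b && a) (dotl r k).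
Proof. reflexivity. Qed.

Definition rows_mx (rs : list (list bool)) (i t : nat) : bool := nth t (nth i rs []) false.

Lemma dotl_as_sum r k : length r = length k ->
  fold_right xorb false (map (fun t => nth t r false && nth t k false) (seq 0 (length r)))
  = dotl r k.
Proof.
  revert k; induction r as [|b r IH]; intros [|a k] H; try discriminate; [reflexivity|].
  cbn [length seq map fold_right]. rewrite <- seq_shift, map_map. cbn.
  f_equal. apply IH. cbn in H; lia.
Qed.

Lemma map_seq_nth {T U} (F : T -> U) (l : list T) d :
  map (fun i => F (nth i l d)) (seq 0 (length l)) = map F l.
Proof.
  induction l as [|a l IH]; cbn; [reflexivity|].
  rewrite <- seq_shift, map_map. cbn. f_equal; exact IH.
Qed.

Lemma compress_rows_mx rs n k :
  (forall r, In r rs -> length r = n) -> length k = n ->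
  compress (length rs) n (rows_mx rs) k = map (fun r => dotl r k) rs.
Proof.
  intros Hr Hk. unfold compress, rows_mx.
  rewrite <- (map_seq_nth (fun r => dotl r k) rs []).
  apply map_ext_in. intros i Hi. apply in_seq in Hi.
  assert (Hri : length (nth i rs []) = n) by (apply Hr, nth_In; lia).
  rewrite <- Hri, <- dotl_as_sum by lia. reflexivity.
Qed.

Fixpoint all_mats (n m : nat) : list (list (list bool)) :=
  match m with
  | O => [[]]
  | S m' => flat_map (fun rs => map (fun r => r :: rs) (all_seqs n)) (all_mats n m')
  end.

Lemma in_all_mats n m rs :
  In rs (all_mats n m) -> length rs = m /\ forall r, In r rs -> length r = n.
Proof.
  revert rs; induction m as [|m IH]; cbn; intros rs H.
  - destruct H as [<-|[]]. split; [reflexivity|intros _ []].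
  - apply in_flat_map in H. destruct H as [rs0 [H0 H1]].
    apply in_map_iff in H1. destruct H1 as [r [<- Hr]].
    apply IH in H0. apply in_all_seqs in Hr. cbn. split; [lia|].
    intros r' [<-|H]; auto. apply H0; auto.
Qed.

(* Averaging a row-wise product over all matrices factorizes over the rows:
   the rows of a uniformly random matrix are independent. *)
Lemma lsum_mats_lprod n m h :
  lsum (all_mats n m) (lprod h) = lsum (all_seqs n) h ^ m.
Proof.
  induction m as [|m IH]; [cbn; lra|].
  cbn [all_mats pow]. rewrite lsum_flat_map, <- IH, <- (lsum_scal_l (all_mats n m)).
  apply lsum_ext; intros rs _. rewrite lsum_map, <- lsum_scal_r. reflexivity.
Qed.

Lemma lsum_mats_one n m : lsum (all_mats n m) (fun _ => 1) = (2 ^ n) ^ m.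
Proof.
  rewrite <- lsum_all_seqs_one, <- lsum_mats_lprod.
  apply lsum_ext; intros rs _. unfold lprod. induction rs as [|r rs IH]; cbn; lra.
Qed.

Definition ind (b : bool) : R := if b then 1 else 0.
Definition eql (u v : list bool) : bool := if list_eq_dec bool_dec u v then true else false.
Definition leR (a b : R) : bool := if Rle_dec a b then true else false.

Lemma dotl_balanced n k k' c : length k = n -> length k' = n -> k <> k' ->
  lsum (all_seqs n) (fun r => ind (Bool.eqb (xorb (dotl r k) (dotl r k')) c)) = 2 ^ n / 2.
Proof.
  revert k k' c; induction n as [|n IH]; intros k k' c Hk Hk' Hne.
  - destruct k, k'; try discriminate. congruence.
  - destruct k as [|a k]; try discriminate. destruct k' as [|a' k']; try discriminate.
    cbn in Hk, Hk'. rewrite lsum_all_seqs_S. cbn [pow].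
    destruct (list_eq_dec bool_dec k k') as [<-|Hkk].
    + assert (a <> a') by congruence.
      rewrite (lsum_ext _ _ (fun _ => 1)), lsum_all_seqs_one; [lra|].
      intros s _. rewrite !dotl_cons.
      destruct a, a', c, (dotl s k); cbn; congruence || lra.
    + rewrite lsum_add.
      rewrite (lsum_ext _ _ (fun r => ind (Bool.eqb (xorb (dotl r k) (dotl r k')) c))).
      rewrite (lsum_ext (all_seqs n) (fun r => ind (Bool.eqb (xorb (dotl (true :: r) (a :: k))
                 (dotl (true :: r) (a' :: k'))) c))
                 (fun r => ind (Bool.eqb (xorb (dotl r k) (dotl r k')) (xorb c (xorb a a'))))).
      * rewrite !IH by auto. lra.
      * intros s _. rewrite !dotl_cons.
        destruct a, a', c, (dotl s k), (dotl s k'); reflexivity.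
      * intros s _. rewrite !dotl_cons. destruct (dotl s k), (dotl s k'); reflexivity.
Qed.

Lemma ind_map_eq {T} (f g : T -> bool) l :
  ind (eql (map f l) (map g l)) = lprod (fun r => ind (Bool.eqb (f r) (g r))) l.
Proof.
  unfold eql. induction l as [|a l IH]; unfold lprod in *; cbn [map fold_right].
  - destruct list_eq_dec; [reflexivity|congruence].
  - rewrite <- IH.
    destruct (list_eq_dec bool_dec (f a :: map f l) (g a :: map g l)) as [e|e];
      destruct (list_eq_dec bool_dec (map f l) (map g l)) as [e'|e'];
      destruct (Bool.eqb (f a) (g a)) eqn:E; unfold ind; try lra.
    all: try (injection e as Ea El; rewrite Ea, Bool.eqb_reflx in E; congruence).
    all: apply Bool.eqb_prop in E; congruence.
Qed.

Lemma collision_count n m k k' : length k = n -> length k' = n -> k' <> k ->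
  lsum (all_mats n m) (fun rs =>
    ind (eql (compress m n (rows_mx rs) k') (compress m n (rows_mx rs) k))) = (2 ^ n / 2) ^ m.
Proof.
  intros Hk Hk' Hne.
  rewrite (lsum_ext _ _ (lprod (fun r => ind (Bool.eqb (dotl r k') (dotl r k))))).
  - rewrite lsum_mats_lprod, <- (dotl_balanced n k' k false) by auto.
    f_equal. apply lsum_ext; intros r _. destruct (dotl r k'), (dotl r k); reflexivity.
  - intros rs Hrs. apply in_all_mats in Hrs. destruct Hrs as [<- Hrows].
    rewrite !compress_rows_mx by auto. apply ind_map_eq.
Qed.

(** * The two-stage maximum-likelihood decoder *)

Definition bin m n B (s : list bool) : list (list bool) :=
  filter (fun k => eql (compress m n B k) s) (all_seqs n).

Lemma in_bin m n B s k : In k (bin m n B s) <-> length k = n /\ compress m n B k = s.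
Proof.
  unfold bin, eql. rewrite filter_In, in_all_seqs.
  destruct list_eq_dec; intuition congruence.
Qed.

Fixpoint argmax_from (w : list bool -> R) (c : list bool) (l : list (list bool)) : list bool :=
  match l with
  | [] => c
  | c' :: l' => let b := argmax_from w c' l' in if Rle_dec (w c) (w b) then b else c
  end.

Definition argmax (w : list bool -> R) (l : list (list bool)) : list bool :=
  match l with [] => [] | c :: l' => argmax_from w c l' end.

Lemma argmax_from_spec w c l :
  In (argmax_from w c l) (c :: l) /\ forall x, In x (c :: l) -> w x <= w (argmax_from w c l).
Proof.
  revert c; induction l as [|c' l IH]; intros c; cbn.
  - split; [left; reflexivity|]. intros x [<-|[]]; lra.
  - destruct (IH c') as [Hin Hmax]. destruct Rle_dec as [Hle|Hlt].
    + split; [right; exact Hin|]. intros x [<-|Hx]; auto.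
    + split; [left; reflexivity|]. intros x [<-|Hx]; [lra|]. specialize (Hmax x Hx). lra.
Qed.

Lemma argmax_spec w l x : In x l -> In (argmax w l) l /\ w x <= w (argmax w l).
Proof.
  destruct l as [|c l]; [intros []|]. intros Hx.
  destruct (argmax_from_spec w c l) as [Hin Hmax]. split; auto.
Qed.

(* The number of rivals of [x]: sequences [x' <> x] in the bin of [x] that
   weigh at least as much as [x].  Maximum-weight decoding in the bin of [x]
   can only fail when this number is at least one. *)
Definition rivals (w : list bool -> R) m n B (x : list bool) : R :=
  lsum (all_seqs n) (fun x' =>
    ind (leR (w x) (w x') && negb (eql x' x) && eql (compress m n B x') (compress m n B x))).

Lemma rivals_nonneg w m n B x : 0 <= rivals w m n B x.
Proof.
  apply lsum_nonneg; intros x' _. unfold ind. destruct (_ && _); lra.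
Qed.

Lemma argmax_bin_rival w m n B x : length x = n ->
  argmax w (bin m n B (compress m n B x)) <> x -> 1 <= rivals w m n B x.
Proof.
  intros Hx Hne. set (xh := argmax w (bin m n B (compress m n B x))) in Hne.
  assert (Hxbin : In x (bin m n B (compress m n B x))) by (apply in_bin; auto).
  destruct (argmax_spec w _ x Hxbin) as [Hin Hle]. fold xh in Hin, Hle.
  apply in_bin in Hin as [Hlen Hcomp].
  unfold rivals. refine (Rle_trans _ _ _ _ (lsum_term_le _ _ xh _ _)).
  - unfold leR, eql. destruct Rle_dec; [|lra].
    destruct (list_eq_dec bool_dec xh x); [congruence|].
    destruct list_eq_dec; [cbn; lra|congruence].
  - apply in_all_seqs; exact Hlen.
  - intros x' _. unfold ind. destruct (_ && _); lra.
Qed.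

Lemma avg_rivals w n m x : length x = n ->
  lsum (all_mats n m) (fun rs => rivals w m n (rows_mx rs) x) <=
  (2 ^ n) ^ m * (/ 2) ^ m * lsum (all_seqs n) (fun x' => ind (leR (w x) (w x'))).
Proof.
  intros Hx. unfold rivals. rewrite lsum_swap, <- lsum_scal_l.
  apply lsum_le; intros x' Hx'. apply in_all_seqs in Hx'.
  assert (Hpos : 0 <= (2 ^ n) ^ m * (/ 2) ^ m).
  { apply Rmult_le_pos; apply pow_le; [apply pow_le; lra | lra]. }
  unfold leR. destruct (Rle_dec (w x) (w x')) as [Hle|Hlt]; cbn [andb].
  2: { rewrite lsum_const. cbn. lra. }
  unfold eql at 1. destruct (list_eq_dec bool_dec x' x) as [_|Hne]; cbn [andb negb].
  1: { rewrite lsum_const. cbn. lra. }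
  rewrite collision_count by auto. rewrite <- Rpow_mult_distr. cbn. unfold Rdiv. lra.
Qed.

Definition K_prob (p : bool -> bool -> R) (k : list bool) : R := lprod (pK p) k.

Definition decoder (p : bool -> bool -> R) m n B (u1 u2 : list bool)
  : list bool * list bool :=
  let kh := argmax (K_prob p) (bin m n B (xorl u1 u2)) in
  let vh := argmax (fun v => seq_prob (pV1K p) v kh) (bin m n B u1) in
  (vh, xorl vh kh).

Lemma pair_eqb_refl u : pair_eqb u u = true.
Proof. unfold pair_eqb. do 2 (destruct list_eq_dec; try congruence). Qed.

(* Union bound on the two stages of the decoder. *)
Lemma decoder_error_le p m n B x y : length x = n -> length y = n ->
  (if pair_eqb (decoder p m n B (compress m n B x) (compress m n B y)) (x, y) then 0 else 1)
  <= Rmin 1 (rivals (K_prob p) m n B (xorl x y))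
     + Rmin 1 (rivals (fun v => seq_prob (pV1K p) v (xorl x y)) m n B x).
Proof.
  intros Hx Hy. set (k := xorl x y).
  assert (Hk : length k = n) by (unfold k; rewrite length_xorl; lia).
  pose proof (rivals_nonneg (K_prob p) m n B k).
  pose proof (rivals_nonneg (fun v => seq_prob (pV1K p) v k) m n B x).
  assert (0 <= Rmin 1 (rivals (K_prob p) m n B k)) by (apply Rmin_glb; lra).
  assert (0 <= Rmin 1 (rivals (fun v => seq_prob (pV1K p) v k) m n B x))
    by (apply Rmin_glb; lra).
  destruct pair_eqb eqn:E; [lra|].
  unfold decoder in E. rewrite <- compress_xorl in E by lia. fold k in E.
  set (kh := argmax (K_prob p) (bin m n B (compress m n B k))) in E.
  destruct (list_eq_dec bool_dec kh k) as [Ek|Nk].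
  - rewrite Ek in E.
    set (vh := argmax (fun v => seq_prob (pV1K p) v k) (bin m n B (compress m n B x))) in E.
    destruct (list_eq_dec bool_dec vh x) as [Ev|Nv].
    + rewrite Ev in E. unfold k in E. rewrite xorl_inv, pair_eqb_refl in E by lia.
      discriminate.
    + pose proof (argmax_bin_rival _ m n B x Hx Nv).
      rewrite (Rmin_left _ (rivals _ m n B x)) by lra. lra.
  - pose proof (argmax_bin_rival _ m n B k Hk Nk).
    rewrite (Rmin_left _ (rivals _ m n B k)) by lra. lra.
Qed.

Lemma Rmin_scal a x y : 0 < a -> Rmin (a * x) (a * y) = a * Rmin x y.
Proof. intros Ha. unfold Rmin. destruct Rle_dec; destruct Rle_dec; nra. Qed.

Lemma avg_decoder_error p n m x y : length x = n -> length y = n ->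
  let M := (2 ^ n) ^ m in
  let h := (/ 2) ^ m in
  lsum (all_mats n m) (fun rs =>
    if pair_eqb (decoder p m n (rows_mx rs) (compress m n (rows_mx rs) x)
                   (compress m n (rows_mx rs) y)) (x, y) then 0 else 1)
  <= M * Rmin 1 (h * lsum (all_seqs n)
                        (fun k' => ind (leR (K_prob p (xorl x y)) (K_prob p k'))))
   + M * Rmin 1 (h * lsum (all_seqs n)
                        (fun v => ind (leR (seq_prob (pV1K p) x (xorl x y))
                                           (seq_prob (pV1K p) v (xorl x y))))).
Proof.
  intros Hx Hy M h.
  assert (HM : 0 < M) by (apply pow_lt, pow_lt; lra).
  assert (Hk : length (xorl x y) = n) by (rewrite length_xorl; lia).
  assert (Havg : forall w z, length z = n ->
    lsum (all_mats n m) (fun rs => Rmin 1 (rivals w m n (rows_mx rs) z))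
    <= M * Rmin 1 (h * lsum (all_seqs n) (fun z' => ind (leR (w z) (w z'))))).
  { intros w z Hz. eapply Rle_trans; [apply lsum_min1|].
    rewrite lsum_mats_one; fold M. rewrite <- Rmin_scal, Rmult_1_r by exact HM.
    apply Rle_min_compat_l. rewrite <- Rmult_assoc. apply avg_rivals; exact Hz. }
  eapply Rle_trans.
  { apply lsum_le. intros rs Hrs. apply (decoder_error_le p m n (rows_mx rs) x y Hx Hy). }
  rewrite lsum_add. apply Rplus_le_compat.
  - apply (Havg (K_prob p)); exact Hk.
  - apply (Havg (fun v => seq_prob (pV1K p) v (xorl x y))); exact Hx.
Qed.

(** * Gallager's bound [min(1, y) <= y^s] *)

Lemma exp_le x y : x <= y -> exp x <= exp y.
Proof. intros [H|H]; [left; apply exp_increasing; exact H | subst; lra]. Qed.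

Lemma ln_le a b : 0 < a -> a <= b -> ln a <= ln b.
Proof. intros Ha [H|H]; [left; apply ln_increasing; auto | subst; lra]. Qed.

Lemma ln_nonpos a : 0 < a -> a <= 1 -> ln a <= 0.
Proof. intros. rewrite <- ln_1. apply ln_le; auto. Qed.

(* Real powers [a^e] of [a > 0], extended by [0^e = 0] so that products of
   probabilities can be raised to powers termwise. *)
Definition powr (a e : R) : R := if Rle_dec a 0 then 0 else exp (e * ln a).

Lemma powr_nonneg a e : 0 <= powr a e.
Proof. unfold powr. destruct Rle_dec; [lra|left; apply exp_pos]. Qed.

Lemma powr_pos a e : 0 < a -> powr a e = exp (e * ln a).
Proof. intros Ha. unfold powr. destruct Rle_dec; [lra|reflexivity]. Qed.

Lemma powr_one e : powr 1 e = 1.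
Proof. rewrite powr_pos, ln_1, Rmult_0_r, exp_0 by lra. reflexivity. Qed.

Lemma powr_zero e : powr 0 e = 0.
Proof. unfold powr. destruct Rle_dec; lra. Qed.

Lemma powr_mult a b e : 0 <= a -> 0 <= b -> powr (a * b) e = powr a e * powr b e.
Proof.
  intros [Ha|<-] [Hb|<-]; try (rewrite ?Rmult_0_l, ?Rmult_0_r, powr_zero; lra).
  rewrite !powr_pos, ln_mult, <- exp_plus by (try apply Rmult_lt_0_compat; auto).
  f_equal; ring.
Qed.

Lemma powr_inv a e : 0 < a -> powr (/ a) e = powr a (- e).
Proof.
  intros Ha. rewrite !powr_pos, ln_Rinv by (try apply Rinv_0_lt_compat; auto).
  f_equal; ring.
Qed.

Lemma mul_powr a e : 0 < a -> a * powr a e = powr a (1 + e).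
Proof.
  intros Ha. rewrite !powr_pos by exact Ha. rewrite <- (exp_ln a) at 1 by exact Ha.
  rewrite <- exp_plus. f_equal; ring.
Qed.

Lemma powr_seq_prob f e x y : (forall a b, 0 <= f a b) ->
  powr (seq_prob f x y) e = seq_prob (fun a b => powr (f a b) e) x y.
Proof.
  intros Hf. revert y; induction x as [|a x IH]; intros [|b y];
    try (cbn; apply powr_one).
  rewrite !seq_prob_cons, powr_mult, IH by (auto; apply seq_prob_nonneg; exact Hf).
  reflexivity.
Qed.

Lemma min1_le_powr y s : 0 < y -> 0 <= s <= 1 -> Rmin 1 y <= powr y s.
Proof.
  intros Hy Hs. rewrite powr_pos by exact Hy. destruct (Rle_dec 1 y).
  - rewrite Rmin_left by auto.
    assert (0 <= ln y) by (rewrite <- ln_1; apply ln_le; lra).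
    pose proof (exp_ineq1_le (s * ln y)). nra.
  - rewrite Rmin_right by lra. assert (ln y <= 0) by (apply ln_nonpos; lra).
    rewrite <- (exp_ln y) at 1 by exact Hy. apply exp_le. nra.
Qed.

Lemma min1_le_powr_of_le h C D s :
  0 <= C <= D -> 0 < h -> 0 < D -> 0 <= s <= 1 -> Rmin 1 (h * C) <= powr (h * D) s.
Proof.
  intros HC Hh HD Hs. apply Rle_trans with (Rmin 1 (h * D)).
  - apply Rle_min_compat_l. apply Rmult_le_compat_l; lra.
  - apply min1_le_powr; [apply Rmult_lt_0_compat|]; auto.
Qed.

(* Gallager's bound for the first decoding stage: a sequence of probability
   [P <= Q] with at most [1/Q] competitors of probability at least [Q]. *)
Lemma gallager_K P Q C h s :
  0 <= P -> P <= Q -> 0 <= C -> C * Q <= 1 -> 0 < h -> 0 <= s <= 1 ->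
  P * Rmin 1 (h * C) <= powr h s * (P * powr Q (- s)).
Proof.
  intros HP HPQ HC HCQ Hh Hs. destruct HP as [HP|<-]; [|rewrite !Rmult_0_l, Rmult_0_r; lra].
  assert (HQ : 0 < Q) by lra.
  assert (HCD : C <= / Q).
  { apply (Rmult_le_reg_r Q); auto. rewrite Rinv_l by lra. lra. }
  pose proof (min1_le_powr_of_le h C (/ Q) s (conj HC HCD) Hh (Rinv_0_lt_compat Q HQ) Hs)
    as Hmin.
  rewrite powr_mult, powr_inv in Hmin by (auto; lra).
  replace (powr h s * (P * powr Q (- s))) with (P * (powr h s * powr Q (- s))) by ring.
  apply Rmult_le_compat_l; lra.
Qed.

(* Gallager's bound for the second decoding stage: a sequence of probability
   [P] with at most [Q/P] competitors of probability at least [P]. *)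
Lemma gallager_V P Q C h s :
  0 <= P -> 0 <= C -> C * P <= Q -> 0 < h -> 0 <= s <= 1 ->
  P * Rmin 1 (h * C) <= powr h s * (powr P (1 - s) * powr Q s).
Proof.
  intros HP HC HCQ Hh Hs.
  assert (Hrhs : 0 <= powr h s * (powr P (1 - s) * powr Q s)).
  { apply Rmult_le_pos; [|apply Rmult_le_pos]; apply powr_nonneg. }
  destruct HP as [HP|<-]; [|rewrite Rmult_0_l; exact Hrhs].
  destruct (Rle_lt_dec Q 0) as [HQ|HQ].
  { assert (C = 0) by nra. subst C. rewrite Rmult_0_r, Rmin_right, Rmult_0_r by lra.
    exact Hrhs. }
  assert (HCD : C <= Q * / P).
  { apply (Rmult_le_reg_r P); auto. rewrite Rmult_assoc, Rinv_l by lra. lra. }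
  assert (HiP : 0 < / P) by (apply Rinv_0_lt_compat; exact HP).
  pose proof (min1_le_powr_of_le h C (Q * / P) s (conj HC HCD) Hh
                (Rmult_lt_0_compat _ _ HQ HiP) Hs) as Hmin.
  rewrite (powr_mult h), (powr_mult Q), (powr_inv P) in Hmin by nra.
  replace (1 - s) with (1 + - s) by ring. rewrite <- mul_powr by exact HP.
  replace (powr h s * (P * powr P (- s) * powr Q s))
    with (P * (powr h s * (powr Q s * powr P (- s)))) by ring.
  apply Rmult_le_compat_l; lra.
Qed.

(** * Second-order bounds on the tilted weights *)

Lemma exp_quad t : 0 <= t -> exp t <= 1 + t + t ^ 2 * exp t.
Proof.
  intros Ht. pose proof (exp_ineq1_le (- t)).
  assert (exp (- t) * exp t = 1) by (rewrite <- exp_plus, Rplus_opp_l; apply exp_0).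
  assert (0 < exp t) by apply exp_pos.
  assert (exp t - 1 <= t * exp t) by nra.
  nra.
Qed.

Lemma exp_second_order P t : 0 <= t -> 0 < P -> P * exp t <= 1 -> P * exp t <= P + P * t + t ^ 2.
Proof.
  intros Ht HP H. pose proof (exp_quad t Ht).
  assert (P * exp t <= P * (1 + t + t ^ 2 * exp t)) by (apply Rmult_le_compat_l; lra).
  assert (0 <= t ^ 2) by (apply pow_le; auto). nra.
Qed.

Lemma tiltK_letter_le P Q s : 0 <= P -> P <= Q -> Q <= 1 -> 0 <= s <= 1 ->
  P * powr Q (- s) <= P - s * (P * ln Q) + s ^ 2 * ln Q ^ 2.
Proof.
  intros HP HPQ HQ1 Hs. destruct HP as [HP|<-].
  2: { rewrite !Rmult_0_l, Rmult_0_r. assert (0 <= s ^ 2 * ln Q ^ 2) by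
         (apply Rmult_le_pos; apply pow2_ge_0). lra. }
  assert (HQ : 0 < Q) by lra. rewrite powr_pos by exact HQ.
  assert (ln Q <= 0) by (apply ln_nonpos; auto).
  assert (Ht : 0 <= - s * ln Q) by nra.
  assert (Hle : P * exp (- s * ln Q) <= 1).
  { apply Rle_trans with (Q * exp (- s * ln Q)).
    - apply Rmult_le_compat_r; [left; apply exp_pos | exact HPQ].
    - rewrite <- (exp_ln Q) at 1 by exact HQ. rewrite <- exp_plus, <- exp_0.
      apply exp_le. nra. }
  pose proof (exp_second_order P _ Ht HP Hle). nra.
Qed.

Lemma tiltV_letter_le P Q s : 0 <= P -> P <= Q -> Q <= 1 -> 0 <= s <= 1 ->
  powr P (1 - s) * powr Q s <= P - s * (P * (ln P - ln Q)) + s ^ 2 * (ln P - ln Q) ^ 2.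
Proof.
  intros HP HPQ HQ1 Hs. destruct HP as [HP|<-].
  2: { rewrite powr_zero, !Rmult_0_l, Rmult_0_r. assert (0 <= s ^ 2 * (ln 0 - ln Q) ^ 2) by
         (apply Rmult_le_pos; apply pow2_ge_0). lra. }
  assert (HQ : 0 < Q) by lra. rewrite !powr_pos by auto.
  assert (ln Q <= 0) by (apply ln_nonpos; auto).
  assert (ln P <= ln Q) by (apply ln_le; auto).
  assert (Ht : 0 <= - s * (ln P - ln Q)) by nra.
  replace (exp ((1 - s) * ln P) * exp (s * ln Q)) with (P * exp (- s * (ln P - ln Q))).
  2: { rewrite <- (exp_ln P) at 1 by exact HP. rewrite <- !exp_plus. f_equal; ring. }
  assert (Hle : P * exp (- s * (ln P - ln Q)) <= 1).
  { rewrite <- (exp_ln P) at 1 by exact HP. rewrite <- exp_plus, <- exp_0.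
    apply exp_le. nra. }
  pose proof (exp_second_order P _ Ht HP Hle). nra.
Qed.

Lemma pow_le_exp a x n : 0 <= a -> a <= 1 + x -> a ^ n <= exp (INR n * x).
Proof.
  intros Ha Hax. apply Rle_trans with (exp x ^ n).
  - apply pow_incr. pose proof (exp_ineq1_le x). lra.
  - induction n as [|n IH]; [cbn; rewrite Rmult_0_l, exp_0; lra|].
    rewrite S_INR. cbn [pow]. replace ((INR n + 1) * x) with (x + INR n * x) by ring.
    rewrite exp_plus. apply Rmult_le_compat_l; [left; apply exp_pos | exact IH].
Qed.

Lemma ln2_pos : 0 < ln 2.
Proof. pose proof ln_lt_2. lra. Qed.

Lemma xlnx_plog2 x : 0 <= x -> x * ln x = ln 2 * plog2 x.
Proof.
  intros Hx. pose proof ln2_pos. unfold plog2. destruct Rle_dec.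
  - replace x with 0 by lra. ring.
  - field. lra.
Qed.

Lemma plog2_nonpos x : 0 <= x <= 1 -> plog2 x <= 0.
Proof.
  intros Hx. unfold plog2. destruct Rle_dec; [lra|].
  assert (ln x <= 0) by (apply ln_nonpos; lra). pose proof ln2_pos.
  assert (0 <= x * (- ln x / ln 2)).
  { apply Rmult_le_pos; [lra|]. unfold Rdiv. apply Rmult_le_pos; [lra|].
    left; apply Rinv_0_lt_compat; auto. }
  unfold Rdiv in *. lra.
Qed.

(** * From error exponents to achievability *)

Lemma powr_half_pow m s : powr ((/ 2) ^ m) s = exp (s * (INR m * - ln 2)).
Proof.
  rewrite powr_pos by (apply pow_lt, Rinv_0_lt_compat; lra).
  rewrite ln_pow, ln_Rinv by lra. reflexivity.
Qed.

(* A tilt parameter small enough to make the second-order term negligible. *)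
Lemma choose_tilt C a : 0 <= C -> 0 < a -> exists s, 0 < s <= 1 /\ s * C <= a.
Proof.
  intros HC Ha. exists (Rmin 1 (a / (C + 1))). split; [split|].
  - apply Rmin_glb_lt; [lra|]. apply Rdiv_lt_0_compat; lra.
  - apply Rmin_l.
  - apply Rle_trans with (a / (C + 1) * (C + 1)); [|right; field; lra].
    apply Rmult_le_compat; [apply Rmin_glb; [lra|]; left; apply Rdiv_lt_0_compat; lra
                           | lra | apply Rmin_r | lra].
Qed.

Lemma stage_error_le n m s c d A H C :
  0 < s <= 1 -> 0 <= A -> A <= 1 + (s * ln 2 * H + s ^ 2 * C) ->
  H <= c -> s * C <= ln 2 * d / 4 -> INR n * (c + d / 2) <= INR m ->
  exp (s * (INR m * - ln 2)) * A ^ n <= exp (- (INR n * (s * ln 2 * d / 4))).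
Proof.
  intros Hs HA HAle HH HsC Hm. pose proof ln2_pos as HL. pose proof (pos_INR n) as Hn.
  eapply Rle_trans.
  { apply Rmult_le_compat_l; [left; apply exp_pos|]. apply (pow_le_exp A _ n HA HAle). }
  rewrite <- exp_plus. apply exp_le.
  assert (s * ln 2 * INR n * (c + d / 2) <= s * ln 2 * INR m).
  { rewrite Rmult_assoc. apply Rmult_le_compat_l; [nra|lra]. }
  assert (INR n * (s * ln 2 * H) <= INR n * (s * ln 2 * c)).
  { apply Rmult_le_compat_l; auto. apply Rmult_le_compat_l; nra. }
  assert (INR n * (s ^ 2 * C) <= INR n * (s * (ln 2 * d / 4))).
  { apply Rmult_le_compat_l; auto. replace (s ^ 2 * C) with (s * (s * C)) by ring.
    apply Rmult_le_compat_l; lra. }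
  nra.
Qed.

Lemma ceil_nat_ge x : 0 <= x -> x <= INR (ceil_nat x).
Proof.
  intros Hx. unfold ceil_nat. destruct (archimed (- x)) as [H1 H2].
  assert (H0 : (0 <= 1 - up (- x))%Z) by (apply le_IZR; rewrite minus_IZR; lra).
  rewrite INR_IZR_INZ, Z2Nat.id by exact H0. rewrite minus_IZR. lra.
Qed.

Lemma exp_neg_small kap eps : 0 < kap -> 0 < eps ->
  exists N, forall n, (N <= n)%nat -> 2 * exp (- (INR n * kap)) <= eps.
Proof.
  intros Hk He. exists (Z.to_nat (up (2 / (kap * eps)))). intros n Hn.
  assert (HnN : 2 / (kap * eps) <= INR n).
  { destruct (archimed (2 / (kap * eps))) as [Ha _]. apply le_INR in Hn.
    destruct (Z_le_gt_dec 0 (up (2 / (kap * eps)))) as [Hz|Hz].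
    - rewrite INR_IZR_INZ, Z2Nat.id in Hn by exact Hz. lra.
    - apply Z.gt_lt, IZR_lt in Hz. assert (0 < 2 / (kap * eps)) by
        (apply Rdiv_lt_0_compat; nra). lra. }
  assert (H2 : 2 / eps <= INR n * kap).
  { apply Rle_trans with (2 / (kap * eps) * kap); [right; field; lra|].
    apply Rmult_le_compat_r; lra. }
  pose proof (exp_ineq1_le (INR n * kap)).
  rewrite exp_Ropp. apply (Rmult_le_reg_r (exp (INR n * kap))); [apply exp_pos|].
  rewrite Rmult_assoc, Rinv_l by (apply Rgt_not_eq, exp_pos).
  apply (Rmult_le_reg_r (/ eps)); [apply Rinv_0_lt_compat; lra|].
  replace (eps * exp (INR n * kap) * / eps) with (exp (INR n * kap)) by (field; lra).
  unfold Rdiv in H2. lra.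
Qed.

Lemma achievable_of_exponent p Rt kap : 0 <= Rt -> 0 < kap ->
  (forall n, exists B g, err_prob p n (ceil_nat (INR n * Rt)) B g <= 2 * exp (- (INR n * kap))) ->
  achievable_sc p Rt.
Proof.
  intros HR Hk Hcodes. split; [exact HR|]. intros eps He.
  destruct (exp_neg_small kap eps Hk He) as [N HN]. exists N. intros n Hn.
  destruct (Hcodes n) as [B [g Herr]]. exists B, g.
  eapply Rle_trans; [exact Herr | exact (HN n Hn)].
Qed.

(** * Random coding bound for a fixed joint law *)

Section RandomCoding.

Variable p : bool -> bool -> R.
Hypothesis p_nonneg : forall a b, 0 <= p a b.
Hypothesis p_sum : sum4 p = 1.

Lemma pK_nonneg b : 0 <= pK p b.
Proof.
  unfold pK. pose proof (p_nonneg false (xorb false b)).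
  pose proof (p_nonneg true (xorb true b)). lra.
Qed.

Lemma pK_sum : pK p false + pK p true = 1.
Proof. unfold sum4 in p_sum. unfold pK; cbn. lra. Qed.

Lemma pK_le1 b : pK p b <= 1.
Proof.
  pose proof pK_sum. pose proof (pK_nonneg false). pose proof (pK_nonneg true).
  destruct b; lra.
Qed.

Lemma p_le_pK a b : p a b <= pK p (xorb a b).
Proof.
  unfold pK. pose proof (p_nonneg false false); pose proof (p_nonneg false true).
  pose proof (p_nonneg true false); pose proof (p_nonneg true true).
  destruct a, b; cbn; lra.
Qed.

Lemma K_prob_nonneg k : 0 <= K_prob p k.
Proof.
  unfold K_prob, lprod. induction k as [|b k IH]; cbn; [lra|].
  apply Rmult_le_pos; [apply pK_nonneg|exact IH].
Qed.

Lemma K_prob_total n : lsum (all_seqs n) (K_prob p) = 1.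
Proof. unfold K_prob. rewrite lsum_lprod, pK_sum. apply pow1. Qed.

Lemma K_prob_xorl x y : K_prob p (xorl x y) = seq_prob (fun a b => pK p (xorb a b)) x y.
Proof. unfold K_prob, lprod, xorl, seq_prob. rewrite map_map. reflexivity. Qed.

Lemma V1K_prob_xorl x y : length x = length y ->
  seq_prob (pV1K p) x (xorl x y) = seq_prob p x y.
Proof.
  revert y; induction x as [|a x IH]; intros [|b y] H; try discriminate; [reflexivity|].
  rewrite xorl_cons, !seq_prob_cons, IH by (cbn in H; lia).
  unfold pV1K. destruct a, b; reflexivity.
Qed.

Lemma V1K_prob_marginal n k : length k = n ->
  lsum (all_seqs n) (fun v => seq_prob (pV1K p) v k) = K_prob p k.
Proof. intros <-. apply seq_prob_marginal. Qed.

Lemma count_K_rivals n k :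
  lsum (all_seqs n) (fun k' => ind (leR (K_prob p k) (K_prob p k'))) * K_prob p k <= 1.
Proof.
  rewrite <- (K_prob_total n). unfold ind, leR.
  rewrite (lsum_ext _ _ (fun k' => if Rle_dec (K_prob p k) (K_prob p k') then 1 else 0))
    by (intros z _; destruct Rle_dec; reflexivity).
  apply count_le_sum; [apply K_prob_nonneg | intros; apply K_prob_nonneg].
Qed.

Lemma count_V_rivals n x y : length x = n -> length y = n ->
  lsum (all_seqs n) (fun v => ind (leR (seq_prob (pV1K p) x (xorl x y))
                                       (seq_prob (pV1K p) v (xorl x y))))
  * seq_prob p x y <= K_prob p (xorl x y).
Proof.
  intros Hx Hy. set (k := xorl x y).
  assert (Hk : length k = n) by (unfold k; rewrite length_xorl; lia).
  rewrite <- (V1K_prob_marginal n k Hk), <- V1K_prob_xorl by lia. fold k. unfold ind, leR.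
  rewrite (lsum_ext _ _ (fun v => if Rle_dec (seq_prob (pV1K p) x k)
                                            (seq_prob (pV1K p) v k) then 1 else 0))
    by (intros z _; destruct Rle_dec; reflexivity).
  apply count_le_sum; intros; apply seq_prob_nonneg; intros; apply p_nonneg.
Qed.

(* The tilted letter weights of Gallager's bound for the two decoding stages;
   their sums over the alphabet are the per-letter error exponents. *)
Definition tiltK (s : R) (a b : bool) : R := p a b * powr (pK p (xorb a b)) (- s).
Definition tiltV (s : R) (a b : bool) : R := powr (p a b) (1 - s) * powr (pK p (xorb a b)) s.

Lemma avg_pair_error n m s x y : length x = n -> length y = n -> 0 <= s <= 1 ->
  lsum (all_mats n m) (fun rs => seq_prob p x y *
     (if pair_eqb (decoder p m n (rows_mx rs) (compress m n (rows_mx rs) x)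
                     (compress m n (rows_mx rs) y)) (x, y) then 0 else 1))
  <= (2 ^ n) ^ m * (powr ((/ 2) ^ m) s * (seq_prob (tiltK s) x y + seq_prob (tiltV s) x y)).
Proof.
  intros Hx Hy Hs. set (P := seq_prob p x y). set (k := xorl x y).
  assert (Hk : length k = n) by (unfold k; rewrite length_xorl; lia).
  assert (HP : 0 <= P) by (apply seq_prob_nonneg; exact p_nonneg).
  set (M := (2 ^ n) ^ m). set (h := (/ 2) ^ m).
  assert (HM : 0 < M) by (apply pow_lt, pow_lt; lra).
  assert (Hh : 0 < h) by (apply pow_lt, Rinv_0_lt_compat; lra).
  set (CK := lsum (all_seqs n) (fun k' => ind (leR (K_prob p k) (K_prob p k')))).
  set (CV := lsum (all_seqs n)
               (fun v => ind (leR (seq_prob (pV1K p) x k) (seq_prob (pV1K p) v k)))).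
  assert (Hind : forall b, 0 <= ind b) by (intros []; cbn; lra).
  assert (HCK : 0 <= CK) by (apply lsum_nonneg; auto).
  assert (HCV : 0 <= CV) by (apply lsum_nonneg; auto).
  rewrite lsum_scal_l. eapply Rle_trans.
  { apply Rmult_le_compat_l; [exact HP|]. apply avg_decoder_error; auto. }
  fold M h k CK CV.
  replace (P * (M * Rmin 1 (h * CK) + M * Rmin 1 (h * CV)))
    with (M * (P * Rmin 1 (h * CK) + P * Rmin 1 (h * CV))) by ring.
  apply Rmult_le_compat_l; [lra|]. rewrite Rmult_plus_distr_l.
  apply Rplus_le_compat.
  - pose proof (count_K_rivals n k) as HcountK.
    eapply Rle_trans; [apply gallager_K; eauto|].
    + unfold P, k. rewrite K_prob_xorl. apply seq_prob_le.
      intros a b; split; [apply p_nonneg|apply p_le_pK].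
    + right. unfold P, k, tiltK. rewrite seq_prob_mult, K_prob_xorl, powr_seq_prob by
        (intros; apply pK_nonneg). reflexivity.
  - pose proof (count_V_rivals n x y Hx Hy) as HcountV. fold k P in HcountV.
    eapply Rle_trans; [apply gallager_V; eauto|].
    right. unfold P, k, tiltV. rewrite seq_prob_mult, K_prob_xorl, !powr_seq_prob
      by (intros; auto using pK_nonneg). reflexivity.
Qed.

Lemma avg_err_prob n m s : 0 <= s <= 1 ->
  lsum (all_mats n m) (fun rs => err_prob p n m (rows_mx rs) (decoder p m n (rows_mx rs)))
  <= lsum (all_mats n m)
       (fun _ => powr ((/ 2) ^ m) s * (sum4 (tiltK s) ^ n + sum4 (tiltV s) ^ n)).
Proof.
  intros Hs. rewrite lsum_const.
  replace (INR (length (all_mats n m))) with ((2 ^ n) ^ m)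
    by (rewrite <- lsum_mats_one, lsum_const; ring).
  unfold err_prob.
  rewrite (lsum_ext _ _ (fun rs => lsum (all_seqs n) (fun x => lsum (all_seqs n) (fun y =>
      seq_prob p x y * (if pair_eqb (decoder p m n (rows_mx rs) (compress m n (rows_mx rs) x)
                          (compress m n (rows_mx rs) y)) (x, y) then 0 else 1)))))
    by (intros; apply Rsum_flat_map_map).
  rewrite lsum_swap.
  rewrite (lsum_ext (all_seqs n) _ (fun x => lsum (all_seqs n) (fun y =>
    lsum (all_mats n m) (fun rs => seq_prob p x y *
      (if pair_eqb (decoder p m n (rows_mx rs) (compress m n (rows_mx rs) x)
         (compress m n (rows_mx rs) y)) (x, y) then 0 else 1)))))
    by (intros; apply lsum_swap).
  apply Rle_trans with (lsum (all_seqs n) (fun x => lsum (all_seqs n) (fun y =>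
    (2 ^ n) ^ m * (powr ((/ 2) ^ m) s * (seq_prob (tiltK s) x y + seq_prob (tiltV s) x y))))).
  { apply lsum_le; intros x Hx. apply lsum_le; intros y Hy.
    apply in_all_seqs in Hx, Hy. apply avg_pair_error; auto. }
  right. rewrite (lsum_ext _ _ (fun x => (2 ^ n) ^ m * powr ((/ 2) ^ m) s *
    (lsum (all_seqs n) (fun y => seq_prob (tiltK s) x y)
     + lsum (all_seqs n) (fun y => seq_prob (tiltV s) x y)))).
  - rewrite lsum_scal_l, lsum_add, !seq_prob_total. ring.
  - intros x _. rewrite <- lsum_add, <- lsum_scal_l. apply lsum_ext; intros y _. ring.
Qed.

Lemma exists_good_code n m s : 0 <= s <= 1 ->
  exists B g, err_prob p n m B g
              <= powr ((/ 2) ^ m) s * (sum4 (tiltK s) ^ n + sum4 (tiltV s) ^ n).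
Proof.
  intros Hs. assert (Hne : all_mats n m <> []).
  { intros E. pose proof (lsum_mats_one n m) as H. rewrite E in H. cbn in H.
    assert (0 < (2 ^ n) ^ m) by (apply pow_lt, pow_lt; lra). lra. }
  destruct (exists_le_average _ _ _ Hne (avg_err_prob n m s Hs)) as [rs [_ H]].
  exists (rows_mx rs), (decoder p m n (rows_mx rs)). exact H.
Qed.

Lemma entropy_K_sum4 : sum4 (fun a b => p a b * ln (pK p (xorb a b))) = - ln 2 * H_K p.
Proof.
  transitivity (pK p false * ln (pK p false) + pK p true * ln (pK p true)).
  { unfold sum4, pK; cbn. ring. }
  rewrite !xlnx_plog2 by apply pK_nonneg. unfold H_K. ring.
Qed.

Lemma entropy_V1K_sum4 : sum4 (fun a b => p a b * ln (p a b)) = - ln 2 * H_V1K p.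
Proof. unfold sum4. rewrite !xlnx_plog2 by apply p_nonneg. unfold H_V1K, pV1K; cbn. ring. Qed.

Lemma H_K_nonneg : 0 <= H_K p.
Proof.
  unfold H_K. pose proof (pK_nonneg false); pose proof (pK_nonneg true).
  pose proof (pK_le1 false); pose proof (pK_le1 true).
  pose proof (plog2_nonpos (pK p false)); pose proof (plog2_nonpos (pK p true)). lra.
Qed.

Definition CK : R := sum4 (fun a b => ln (pK p (xorb a b)) ^ 2).
Definition CV : R := sum4 (fun a b => (ln (p a b) - ln (pK p (xorb a b))) ^ 2).

Lemma CK_nonneg : 0 <= CK.
Proof. unfold CK, sum4. repeat apply Rplus_le_le_0_compat; apply pow2_ge_0. Qed.

Lemma CV_nonneg : 0 <= CV.
Proof. unfold CV, sum4. repeat apply Rplus_le_le_0_compat; apply pow2_ge_0. Qed.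

Lemma tiltK_sum_le s : 0 <= s <= 1 -> sum4 (tiltK s) <= 1 + (s * ln 2 * H_K p + s ^ 2 * CK).
Proof.
  intros Hs. eapply Rle_trans.
  { apply sum4_le. intros a b. apply tiltK_letter_le; auto using p_le_pK, pK_le1. }
  right. transitivity (sum4 p - s * sum4 (fun a b => p a b * ln (pK p (xorb a b))) + s ^ 2 * CK).
  { unfold CK, sum4. ring. }
  rewrite entropy_K_sum4, p_sum. ring.
Qed.

Lemma tiltV_sum_le s : 0 <= s <= 1 ->
  sum4 (tiltV s) <= 1 + (s * ln 2 * H_V1_given_K p + s ^ 2 * CV).
Proof.
  intros Hs. eapply Rle_trans.
  { apply sum4_le. intros a b. apply tiltV_letter_le; auto using p_le_pK, pK_le1. }
  right. transitivity (sum4 p - s * (sum4 (fun a b => p a b * ln (p a b))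
                                     - sum4 (fun a b => p a b * ln (pK p (xorb a b))))
                       + s ^ 2 * CV).
  { unfold CV, sum4. ring. }
  rewrite entropy_V1K_sum4, entropy_K_sum4, p_sum. unfold H_V1_given_K. ring.
Qed.

Lemma tiltK_sum_nonneg s : 0 <= sum4 (tiltK s).
Proof.
  unfold sum4, tiltK. repeat apply Rplus_le_le_0_compat; apply Rmult_le_pos;
    auto using powr_nonneg.
Qed.

Lemma tiltV_sum_nonneg s : 0 <= sum4 (tiltV s).
Proof.
  unfold sum4, tiltV. repeat apply Rplus_le_le_0_compat; apply Rmult_le_pos; apply powr_nonneg.
Qed.

Lemma error_exponent c delta : H_K p <= c -> H_V1_given_K p <= c -> 0 < delta ->
  exists kap, 0 < kap /\ forall n m, INR n * (c + delta / 2) <= INR m ->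
    exists B g, err_prob p n m B g <= 2 * exp (- (INR n * kap)).
Proof.
  intros HcK HcV Hd. pose proof ln2_pos as HL.
  pose proof CK_nonneg as HCK. pose proof CV_nonneg as HCV.
  destruct (choose_tilt (CK + CV) (ln 2 * delta / 4) ltac:(lra) ltac:(nra))
    as [s [Hs HsC]].
  exists (s * ln 2 * delta / 4). split; [assert (0 < s * ln 2) by nra; nra|].
  intros n m Hm.
  destruct (exists_good_code n m s ltac:(lra)) as [B [g Herr]]. exists B, g.
  eapply Rle_trans; [exact Herr|]. rewrite powr_half_pow, Rmult_plus_distr_l.
  pose proof (stage_error_le n m s c delta _ _ _ Hs (tiltK_sum_nonneg s)
                (tiltK_sum_le s ltac:(lra)) HcK ltac:(nra) Hm).
  pose proof (stage_error_le n m s c delta _ _ _ Hs (tiltV_sum_nonneg s)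
                (tiltV_sum_le s ltac:(lra)) HcV ltac:(nra) Hm).
  lra.
Qed.

End RandomCoding.

Theorem claim1 (p : bool -> bool -> R)
  (Hnn : forall a b, 0 <= p a b)
  (Hsum : p false false + p false true + p true false + p true true = 1) :
  forall delta, delta > 0 ->
    exists Rt, achievable_sc p Rt /\
      Rt <= Rmax (H_K p) (H_V1_given_K p) + delta.
Proof.
  intros delta Hd. set (c := Rmax (H_K p) (H_V1_given_K p)).
  assert (Hc : 0 <= c).
  { pose proof (H_K_nonneg p Hnn Hsum). pose proof (Rmax_l (H_K p) (H_V1_given_K p)).
    unfold c. lra. }
  destruct (error_exponent p Hnn Hsum c delta (Rmax_l _ _) (Rmax_r _ _) Hd)
    as [kap [Hkap Hcodes]].
  exists (c + delta / 2). split; [|lra].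
  apply (achievable_of_exponent p _ kap); [lra | exact Hkap |].
  intros n. apply Hcodes. apply ceil_nat_ge.
  apply Rmult_le_pos; [apply pos_INR | lra].
Qed.
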